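(* If a graph $G$ on $[n]$ is geometrically copious, then every vertex of $G$ has degree at least three.
   Context: Setup. $G\subseteq\binom{[n]}{2}$ is a simple graph on $[n]$, with $n\ge4$, and $G_i$ is the set of neighbours of $i$. The kinematic space $\mathcal K_G\subseteq\mathbb P^{|G|-1}$ is cut out by $\sum_{j\in G_i}s_{ij}=0$ for $i\in[n]$. $\mathcal H$ is the braid arrangement $\bigcup_{i<j}\{x_i=x_j\}$. Scattering correspondence. $$\mathcal V_G=\{(s,x)\in\mathbb P^{|G|-1}\times(\mathbb P^{n-1}\setminus\mathcal H): s\in\mathcal K_G,\ \textstyle\sum_{j\in G_i}s_{ij}/(x_i-x_j)=0\ \forall i\}.$$ Solutions in $x$ come in $\mathrm{PGL}(2)$-orbits, where $\mathrm{PGL}(2)$ acts by $x_i\mapsto(ax_i+b)/(cx_i+d)$. Each orbit corresponds to a point of the moduli space $\mathcal M_{0,n}$ of $n$ distinct points on $\mathbb P^1$, giving projections $\mathcal K_G\leftarrow\mathcal V_G\to\mathcal M_{0,n}$. Geometrically copious. $G$ is geometrically copious if $\mathcal V_G\to\mathcal M_{0,n}$ is dominant and the fiber of $\mathcal V_G\to\mathcal K_G$ over a generic point of $\mathcal K_G$ has dimension two in $\mathbb P^{n-1}$ (i.e. modulo $\mathrm{PGL}(2)$ this map is finite-to-one). *)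

From HB Require Import structures.
From mathcomp Require Import all_boot all_order all_algebra.
From mathcomp Require Import mpoly.
Set Implicit Arguments. Unset Strict Implicit. Unset Printing Implicit Defensive.
Import Order.TTheory GRing.Theory.
Local Open Scope ring_scope.

Definition simple_graph (n : nat) (G : {set {set 'I_n}}) : Prop :=
  forall e, e \in G -> #|e| = 2%N.

Definition nbhd (n : nat) (G : {set {set 'I_n}}) (i : 'I_n) : {set 'I_n} :=
  [set j | [set i; j] \in G].
Definition degree (n : nat) (G : {set {set 'I_n}}) (i : 'I_n) : nat := #|nbhd G i|.

(* A Mandelstam vector s in C^{G} is stored as an n x n matrix with s i j = s j i
   = s_{ij} for {i,j} in G and 0 off the edges (a linear embedding of C^{|G|}).
   in_KG: s lies in (the affine cone over) the kinematic space K_G. *)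
Definition in_KG (C : fieldType) (n : nat) (G : {set {set 'I_n}}) (s : 'M[C]_n) : Prop :=
  [/\ forall i j, s i j = s j i,
      forall i j, [set i; j] \notin G -> s i j = 0
    & forall i, \sum_(j in nbhd G i) s i j = 0].

Definition svec (C : fieldType) (n : nat) (s : 'M[C]_n) : 'I_(n * n) -> C :=
  fun k => mxvec s 0 k.

Definition distinct_coords (C : fieldType) (n : nat) (x : 'I_n -> C) : Prop :=
  forall i j, i != j -> x i != x j.

Definition scattering (C : fieldType) (n : nat) (G : {set {set 'I_n}})
    (s : 'M[C]_n) (x : 'I_n -> C) : Prop :=
  forall i, \sum_(j in nbhd G i) s i j / (x i - x j) = 0.

(* Fiber of V_G -> K_G over s, as a subset of the affine cone C^n over P^{n-1} \ H *)
Definition fiber (C : fieldType) (n : nat) (G : {set {set 'I_n}}) (s : 'M[C]_n)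
    (x : 'I_n -> C) : Prop :=
  distinct_coords x /\ scattering G s x.

(* Projection of V_G to the x-coordinates (affine cone over its image in P^{n-1} \ H) *)
Definition Vx (C : fieldType) (n : nat) (G : {set {set 'I_n}}) (x : 'I_n -> C) : Prop :=
  exists s : 'M[C]_n, [/\ in_KG G s, s != 0 & fiber G s x].

Definition vars_in (C : fieldType) (n : nat) (p : {mpoly C[n]}) (I : {set 'I_n}) : Prop :=
  forall m : 'X_{1..n}, m \in msupp p -> forall i, i \notin I -> m i = 0%N.

Definition alg_indep_on (C : fieldType) (n : nat) (S : ('I_n -> C) -> Prop)
    (I : {set 'I_n}) : Prop :=
  forall p : {mpoly C[n]}, vars_in p I -> (forall x, S x -> p.@[x] = 0) -> p = 0.

(* dimension of (the Zariski closure of) S in affine n-space is d: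
   the maximal number of coordinate functions algebraically independent on S
   (transcendence degree of the function field). *)
Definition affine_dim (C : fieldType) (n : nat) (S : ('I_n -> C) -> Prop) (d : nat) : Prop :=
  (exists I : {set 'I_n}, #|I| = d /\ alg_indep_on S I) /\
  (forall I : {set 'I_n}, alg_indep_on S I -> (#|I| <= d)%N).

(* dimension of a projective set, given via its affine cone S (a cone minus 0):
   projective dimension d  <->  affine cone dimension d+1 *)
Definition proj_dim (C : fieldType) (n : nat) (S : ('I_n -> C) -> Prop) (d : nat) : Prop :=
  affine_dim S d.+1.

Definition zariski_dense (C : fieldType) (n : nat) (S : ('I_n -> C) -> Prop) : Prop :=
  forall p : {mpoly C[n]}, (forall x, S x -> p.@[x] = 0) -> p = 0.

(* The image of V_G in M_{0,n} is dense iff its preimage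
   under the (open, surjective) quotient map from the configuration space
   {x in C^n : distinct coords} is dense; that preimage is exactly Vx G
   (the scattering equations for s in K_G are PGL(2)-covariant), and the
   configuration space is dense open in C^n. *)
Definition dominant_to_M0n (C : fieldType) (n : nat) (G : {set {set 'I_n}}) : Prop :=
  zariski_dense (@Vx C n G).

(* The fiber of V_G -> K_G over a generic point of K_G has dimension two in P^{n-1}:
   there is a nonempty Zariski-open subset {q != 0} of (projective) K_G on which it holds. *)
Definition generic_fiber_dim2 (C : fieldType) (n : nat) (G : {set {set 'I_n}}) : Prop :=
  exists q : {mpoly C[n * n]},
    (exists s0 : 'M[C]_n, [/\ in_KG G s0, s0 != 0 & q.@[svec s0] != 0]) /\
    (forall s : 'M[C]_n, in_KG G s -> s != 0 -> q.@[svec s] != 0 ->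
       proj_dim (fiber G s) 2).

Definition geometrically_copious (C : fieldType) (n : nat) (G : {set {set 'I_n}}) : Prop :=
  dominant_to_M0n C G /\ generic_fiber_dim2 C G.

(* If vertex i has degree at most two, the relations defining K_G together with the
   scattering equation at i force s_ib = 0 for every b, so x_i occurs in no equation.
   The fiber over s is then stable under giving x_i any new value while moving the
   other coordinates by a Möbius transformation, and a Möbius transformation can send
   three given points anywhere. Hence x_i, x_j, x_k, x_l are algebraically independent
   on the fiber, whose projective dimension is then at least 3. *)

From HB Require Import structures.
From mathcomp Require Import all_boot all_order all_algebra.
From mathcomp Require Import mpoly.
From mathcomp Require Import ring.
From Stdlib Require Import Classical.
Set Implicit Arguments. Unset Strict Implicit. Unset Printing Implicit Defensive.
Import Order.TTheory GRing.Theory.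
Local Open Scope ring_scope.

Section MultivariateToUnivariate.
Variables (R : comNzRingType) (n : nat).
Implicit Types (p : {mpoly R[n.+1]}) (m : 'X_{1..n.+1}).

Local Notation widen := (widen_ord (leqnSn n)).
Local Notation mnm_init m := [multinom m (widen i) | i < n].

Lemma meval_muni p (v : 'I_n.+1 -> R) :
  p.@[v] = (map_poly (meval (v \o widen)) (muni p)).[v ord_max].
Proof.
rewrite mevalE muniE rmorph_sum horner_sum; apply: eq_bigr => m _.
rewrite -!mul_polyC !rmorphM /= !map_polyC map_polyXn !hornerE /=.
rewrite mevalZ mevalX big_ord_recr /= mulrA; congr (_ * _ * _).
by apply: eq_bigr => i _; rewrite mnmE.
Qed.

Lemma eq_mnm_init_max m m' :
  (mnm_init m' == mnm_init m) && (m' ord_max == m ord_max) = (m' == m).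
Proof.
apply/idP/eqP => [/andP [/eqP init_eq /eqP max_eq] | ->]; last by rewrite !eqxx.
apply/mnmP => i; case: (unliftP ord_max i) => [j ->|->] //.
have -> : lift ord_max j = widen j.
  by apply: val_inj; rewrite /= /bump leqNgt ltn_ord.
by move/mnmP: init_eq => /(_ j); rewrite !mnmE.
Qed.

Lemma mcoeff_muni p m : p@_m = (muni p)`_(m ord_max)@_(mnm_init m).
Proof.
rewrite {1}[p]mpolyE muniE !raddf_sum /= coef_sum raddf_sum /=.
apply: eq_bigr => m' _.
rewrite mcoeffZ mcoeffX coefZ coefXn mulr_natr mcoeffMn mcoeffZ mcoeffX.
rewrite -eq_mnm_init_max [m ord_max == _]eq_sym.
by case: (_ == _); case: (_ == _); rewrite /= ?mulr0 ?mulr1.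
Qed.

Lemma muni_eq0 p : (muni p == 0) = (p == 0).
Proof.
apply/eqP/eqP => [p0 | ->]; last exact: muni0.
by apply/mpolyP => m; rewrite mcoeff_muni p0 coef0 !mcoeff0.
Qed.

End MultivariateToUnivariate.

Section PolynomialIdentity.
Variable C : fieldType.
Hypothesis pchar0C : [pchar C] =i pred0.

Lemma pchar0_natr_inj : injective (fun k : nat => k%:R : C).
Proof.
have [natr_eq0 _] := pcharf0P C; have {}natr_eq0 := natr_eq0 pchar0C.
suff lt_neq a b : (a < b)%N -> a%:R != b%:R :> C.
  move=> a b /= ab_eq.
  by case: (ltngtP a b) => // /lt_neq; rewrite ab_eq eqxx.
move=> ab; rewrite eq_sym -(subnK (ltnW ab)) natrD -subr_eq0 addrK natr_eq0.
by rewrite subn_eq0 -ltnNge.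
Qed.

Lemma pchar0_poly_eq0 (q : {poly C}) : (forall c, q.[c] = 0) -> q = 0.
Proof.
move=> q0; apply: (@roots_geq_poly_eq0 _ q [seq k%:R | k <- iota 0 (size q)]).
- by apply/allP => _ /mapP [k _ ->]; apply/rootP.
- by rewrite map_inj_uniq ?iota_uniq //; exact: pchar0_natr_inj.
- by rewrite size_map size_iota.
Qed.

Lemma pchar0_mpoly_eq0 n (p : {mpoly C[n]}) : (forall v, p.@[v] = 0) -> p = 0.
Proof.
elim: n p => [|n IHn] p p0.
  have mnm0 (m : 'X_{1..0}) : m = 0%MM by apply/mnmP => -[].
  rewrite [p]mpolyE (eq_bigr (fun m => p@_m *: 1)); last first.
    by move=> m _; rewrite (mnm0 m) mpolyX0.
  have := p0 (fun _ => 0); rewrite -scaler_suml mevalE.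
  by under eq_bigr do rewrite big_ord0 mulr1; move=> ->; rewrite scale0r.
apply/eqP; rewrite -muni_eq0; apply/eqP/polyP => k; rewrite coef0.
apply: IHn => w.
have muni_w0 : map_poly (meval w) (muni p) = 0.
  apply: pchar0_poly_eq0 => c.
  pose v (i : 'I_n.+1) := if insub (val i) is Some j then w j else c.
  have := p0 v; rewrite meval_muni.
  have -> : v ord_max = c by rewrite /v insubF //= ltnn.
  rewrite (@eq_map_poly _ _ _ (meval w)) // => q; apply: meval_eq => j.
  by rewrite /v /= valK.
by have := congr1 (coefp k) muni_w0; rewrite /= coef_map coef0.
Qed.

End PolynomialIdentity.

Lemma eq_meval_vars_in (C : fieldType) n (p : {mpoly C[n]}) (I : {set 'I_n}) v w :
  vars_in p I -> {in I, v =1 w} -> p.@[v] = p.@[w].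
Proof.
move=> p_I vw; rewrite !mevalE; apply: eq_big_seq => m m_p; congr (_ * _).
apply: eq_bigr => i _; case: (boolP (i \in I)) => [/vw -> // | iNI].
by rewrite (p_I m m_p i iNI) !expr0.
Qed.

Lemma alg_indep_on_nonempty (C : fieldType) n (S : ('I_n -> C) -> Prop) I :
  alg_indep_on S I -> exists x, S x.
Proof.
move=> indepI; apply: NNPP => S0; move/eqP: (oner_neq0 {mpoly C[n]}); apply.
apply: indepI => [m | x Sx]; last by case: S0; exists x.
by rewrite msupp1 inE => /eqP -> i _; rewrite mnm0E.
Qed.

Lemma alg_indep_on_of_guard (C : fieldType) (pchar0C : [pchar C] =i pred0) n
    (S : ('I_n -> C) -> Prop) (I : {set 'I_n}) (h : {mpoly C[n]}) :
  h != 0 -> (forall v, h.@[v] != 0 -> exists2 y, S y & {in I, y =1 v}) ->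
  alg_indep_on S I.
Proof.
move=> h_neq0 reach p p_I p0.
have : p * h = 0.
  apply: (pchar0_mpoly_eq0 pchar0C) => v; rewrite mevalM.
  have [-> | /reach [y Sy yv]] := eqVneq h.@[v] 0; first by rewrite mulr0.
  by rewrite -(eq_meval_vars_in p_I yv) p0 ?mul0r.
by move/eqP; rewrite mulf_eq0 (negbTE h_neq0) orbF => /eqP.
Qed.

Section Mobius.
Variables (F : fieldType) (al be ga de : F).
Hypothesis det_neq0 : al * de - be * ga != 0.

Definition mobius (x : F) : F := (al * x + be) / (ga * x + de).

Lemma mobiusB xa xb : ga * xa + de != 0 -> ga * xb + de != 0 ->
  mobius xa - mobius xb = (al * de - be * ga) * (xa - xb) / ((ga * xa + de) * (ga * xb + de)).
Proof. by move=> da_neq0 db_neq0; rewrite /mobius; field; rewrite da_neq0 db_neq0. Qed.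

Lemma mobius_eq x u : ga * x + de != 0 -> al * x + be = u * (ga * x + de) -> mobius x = u.
Proof. by move=> d_neq0 num_eq; rewrite /mobius num_eq mulfK. Qed.

Lemma mobius_neq xa xb : ga * xa + de != 0 -> ga * xb + de != 0 ->
  xa != xb -> mobius xa != mobius xb.
Proof.
move=> da_neq0 db_neq0 xab; rewrite -subr_eq0 mobiusB //.
by rewrite !mulf_neq0 // ?invr_neq0 ?mulf_neq0 // subr_eq0.
Qed.

(* The covariance of the scattering equations: each term transforms affinely, with
   coefficients depending only on the first point. *)
Lemma divr_mobiusB s xa xb : ga * xa + de != 0 -> ga * xb + de != 0 -> xa != xb ->
  s / (mobius xa - mobius xb) =
  (ga * xa + de) ^+ 2 / (al * de - be * ga) * (s / (xa - xb))
  - (ga * xa + de) * ga / (al * de - be * ga) * s.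
Proof.
move=> da_neq0 db_neq0; rewrite -subr_eq0 => xab; rewrite mobiusB //.
by field; rewrite det_neq0 xab da_neq0 db_neq0.
Qed.

End Mobius.

(* Up to a common factor, the coefficients of the Möbius map y = (a x + b) / (c x + d)
   solving the cross-ratio equation [u1, u2, u3; y] = [a1, a2, a3; x]. *)
Section ThreePointMobius.
Variables (R : comPzRingType) (a1 a2 a3 u1 u2 u3 : R).

Definition mobius3_a := (u2 - u3) * u1 * (a2 - a1) - (u2 - u1) * u3 * (a2 - a3).
Definition mobius3_b := (u2 - u1) * u3 * (a2 - a3) * a1 - (u2 - u3) * u1 * (a2 - a1) * a3.
Definition mobius3_c := (u2 - u3) * (a2 - a1) - (u2 - u1) * (a2 - a3).
Definition mobius3_d := (u2 - u1) * (a2 - a3) * a1 - (u2 - u3) * (a2 - a1) * a3.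

Lemma mobius3_interpolates :
  [/\ mobius3_a * a1 + mobius3_b = u1 * (mobius3_c * a1 + mobius3_d),
      mobius3_a * a2 + mobius3_b = u2 * (mobius3_c * a2 + mobius3_d)
    & mobius3_a * a3 + mobius3_b = u3 * (mobius3_c * a3 + mobius3_d)].
Proof. by rewrite /mobius3_a /mobius3_b /mobius3_c /mobius3_d; split; ring. Qed.

End ThreePointMobius.

Lemma mobius3_id (R : comPzRingType) (a1 a2 a3 : R) :
  let D := (a2 - a3) * (a2 - a1) * (a1 - a3) in
  [/\ mobius3_a a1 a2 a3 a1 a2 a3 = D, mobius3_b a1 a2 a3 a1 a2 a3 = 0,
      mobius3_c a1 a2 a3 a1 a2 a3 = 0 & mobius3_d a1 a2 a3 a1 a2 a3 = D].
Proof. by rewrite /mobius3_a /mobius3_b /mobius3_c /mobius3_d; split; ring. Qed.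

Lemma nbhd_neq n (G : {set {set 'I_n}}) a b : simple_graph G -> b \in nbhd G a -> b != a.
Proof.
move=> simpleG; rewrite inE; apply: contraTneq => ->; apply/negP => /simpleG.
by rewrite setUid cards1.
Qed.

Lemma two_scattering_terms_eq0 (F : fieldType) (xi xc xd a b : F) :
  xi != xc -> xi != xd -> xc != xd ->
  a + b = 0 -> a / (xi - xc) + b / (xi - xd) = 0 -> a = 0.
Proof.
move=> xi_xc xi_xd xc_xd /eqP; rewrite addrC addr_eq0 => /eqP -> sc0.
have : a * (xc - xd) = 0.
  rewrite -[RHS](mul0r ((xi - xc) * (xi - xd))) -sc0.
  by field; rewrite !subr_eq0 xi_xc xi_xd.
by move/eqP; rewrite mulf_eq0 subr_eq0 (negbTE xc_xd) orbF => /eqP.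
Qed.

Lemma low_degree_row_eq0 (F : fieldType) n (G : {set {set 'I_n}}) (s : 'M[F]_n) x i :
  simple_graph G -> in_KG G s -> fiber G s x -> (degree G i < 3)%N ->
  forall b, s i b = 0.
Proof.
move=> simpleG [_ s_off s_sum] [x_inj x_scat] deg_lt3 b.
have [b_nbr | ] := boolP (b \in nbhd G i); last by rewrite inE => /s_off.
move: deg_lt3; rewrite /degree; case deg: #|nbhd G i| => [|[|[|]]] // _.
- by move: b_nbr; rewrite (cards0_eq deg) inE.
- have /cards1P [c nbhd_i] : #|nbhd G i| == 1%N by rewrite deg.
  by move: b_nbr (s_sum i); rewrite nbhd_i big_set1 inE => /eqP ->.
- have /cards2P [c [d [cd nbhd_i]]] : #|nbhd G i| == 2%N by rewrite deg.
  have [ci di] : c != i /\ d != i.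
    by rewrite !(nbhd_neq simpleG) // nbhd_i !inE eqxx ?orbT.
  have := s_sum i; have := x_scat i.
  rewrite nbhd_i !big_setU1 ?inE //= !big_set1 => scat sum.
  have sc0 : s i c = 0.
    by apply: two_scattering_terms_eq0 sum scat; apply: x_inj; rewrite // eq_sym.
  move: sum b_nbr; rewrite sc0 add0r nbhd_i !inE.
  by move=> sd0 /orP [] /eqP ->.
Qed.

Lemma fiber_mobius_free_vertex (F : fieldType) n (G : {set {set 'I_n}}) (s : 'M[F]_n)
    x i (al be ga de t : F) :
  simple_graph G -> in_KG G s -> (forall b, s i b = 0) -> fiber G s x ->
  al * de - be * ga != 0 -> (forall m, ga * x m + de != 0) ->
  (forall m, m != i -> t != mobius al be ga de (x m)) ->
  fiber G s (fun m => if m == i then t else mobius al be ga de (x m)).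
Proof.
move=> simpleG [s_sym _ s_sum] row_i0 [x_inj x_scat] det_neq0 den_neq0 t_new.
split=> [a b ab | a] /=.
  have [ai | ai] := eqVneq a i; have [bi | bi] := eqVneq b i.
  - by move: ab; rewrite ai bi eqxx.
  - by rewrite t_new.
  - by rewrite eq_sym t_new.
  - exact: mobius_neq (x_inj _ _ ab).
pose da := ga * x a + de; pose D := al * de - be * ga.
rewrite (eq_bigr (fun b => da ^+ 2 / D * (s a b / (x a - x b)) - da * ga / D * s a b)).
  by rewrite big_split /= sumrN -!mulr_sumr x_scat s_sum !mulr0 subrr.
move=> b b_nbr; have [-> | ai] := eqVneq a i; first by rewrite row_i0 !mul0r !mulr0 subrr.
have [bi | bi] := eqVneq b i; first by rewrite bi s_sym row_i0 !mul0r !mulr0 subrr.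
by rewrite divr_mobiusB // x_inj // eq_sym (nbhd_neq simpleG b_nbr).
Qed.

(* Nonzero exactly when the Möbius map carrying x_j, x_k, x_l to u_j, u_k, u_l is
   invertible, has no pole among the x_m, and does not take the value u_i there. *)
Definition free_vertex_guard (R : comPzRingType) n (x u : 'I_n -> R) (i j k l : 'I_n) : R :=
  let al := mobius3_a (x j) (x k) (x l) (u j) (u k) (u l) in
  let be := mobius3_b (x j) (x k) (x l) (u j) (u k) (u l) in
  let ga := mobius3_c (x j) (x k) (x l) (u j) (u k) (u l) in
  let de := mobius3_d (x j) (x k) (x l) (u j) (u k) (u l) in
  (al * de - be * ga) * \prod_m (ga * x m + de) *
  \prod_(m | m != i) (u i * (ga * x m + de) - (al * x m + be)).

Lemma meval_free_vertex_guard (C : fieldType) n (x v : 'I_n -> C) i j k l :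
  (free_vertex_guard (fun m => (x m)%:MP) (fun m => 'X_m) i j k l).@[v] =
  free_vertex_guard x v i j k l.
Proof.
rewrite /free_vertex_guard /mobius3_a /mobius3_b /mobius3_c /mobius3_d.
rewrite !(rmorphB, rmorphM) /= !(rmorph_prod (meval v)) !mevalC !mevalXU.
by congr (_ * _ * _); apply: eq_bigr => m _;
  rewrite !(rmorphB, rmorphM, rmorphD) /= !mevalC !mevalXU.
Qed.

Lemma free_vertex_guard_self (F : fieldType) n (x : 'I_n -> F) i j k l :
  distinct_coords x -> j != k -> j != l -> k != l -> free_vertex_guard x x i j k l != 0.
Proof.
move=> x_inj jk jl kl; rewrite /free_vertex_guard.
have [-> -> -> ->] := mobius3_id (x j) (x k) (x l).
set D := (x k - x l) * (x k - x j) * (x j - x l).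
have D_neq0 : D != 0 by rewrite !mulf_neq0 ?subr_eq0 ?x_inj // eq_sym.
rewrite mulr0 subr0; apply: mulf_neq0; first apply: mulf_neq0.
- exact: mulf_neq0.
- by apply/prodf_neq0 => m _; rewrite mul0r add0r.
apply/prodf_neq0 => m mi; rewrite mul0r add0r addr0 (mulrC (x i)) -mulrBr.
by rewrite mulf_neq0 // subr_eq0 x_inj // eq_sym.
Qed.

Lemma fiber_of_free_vertex_guard (F : fieldType) n (G : {set {set 'I_n}}) (s : 'M[F]_n)
    x v i j k l :
  simple_graph G -> in_KG G s -> (forall b, s i b = 0) -> fiber G s x ->
  j != i -> k != i -> l != i -> free_vertex_guard x v i j k l != 0 ->
  exists2 y, fiber G s y & {in [set i; j; k; l], y =1 v}.
Proof.
move=> simpleG s_KG row_i0 x_fib ji ki li; rewrite /free_vertex_guard.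
have := mobius3_interpolates (x j) (x k) (x l) (v j) (v k) (v l).
set al := mobius3_a _ _ _ _ _ _; set be := mobius3_b _ _ _ _ _ _.
set ga := mobius3_c _ _ _ _ _ _; set de := mobius3_d _ _ _ _ _ _.
move=> [map_j map_k map_l] guard_neq0.
have det_neq0 : al * de - be * ga != 0.
  by apply: contraNneq guard_neq0 => ->; rewrite !mul0r.
have den_neq0 m : ga * x m + de != 0.
  by apply: contraNneq guard_neq0 => den0; rewrite (bigD1 m) //= den0 mul0r mulr0 mul0r.
have vi_new m : m != i -> v i != mobius al be ga de (x m).
  move=> mi; apply: contraNneq guard_neq0 => vi_eq.
  by rewrite [X in _ * X](bigD1 m mi) /= vi_eq divfK ?subrr ?mul0r ?mulr0.
exists (fun m => if m == i then v i else mobius al be ga de (x m)).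
  exact: fiber_mobius_free_vertex.
move=> m; rewrite !inE -!orbA => /or4P [] /eqP ->; rewrite ?eqxx //.
all: rewrite ?(negbTE ji, negbTE ki, negbTE li); exact: mobius_eq.
Qed.

Lemma alg_indep_on_free_vertex (C : fieldType) (pchar0C : [pchar C] =i pred0) n
    (G : {set {set 'I_n}}) (s : 'M[C]_n) x i j k l :
  simple_graph G -> in_KG G s -> (forall b, s i b = 0) -> fiber G s x ->
  j != i -> k != i -> l != i -> j != k -> j != l -> k != l ->
  alg_indep_on (fiber G s) [set i; j; k; l].
Proof.
move=> simpleG s_KG row_i0 x_fib ji ki li jk jl kl.
pose h := free_vertex_guard (fun m => (x m)%:MP) (fun m => 'X_m) i j k l.
apply: (alg_indep_on_of_guard pchar0C (h := h)) => [|v].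
  apply: contra_neq (free_vertex_guard_self i x_fib.1 jk jl kl) => h0.
  by rewrite -meval_free_vertex_guard -/h h0 meval0.
by rewrite meval_free_vertex_guard; exact: fiber_of_free_vertex_guard.
Qed.

Lemma exists_three_others n (i : 'I_n) : (4 <= n)%N ->
  exists j k l : 'I_n, [/\ j != i, k != i, l != i & [/\ j != k, j != l & k != l]].
Proof.
move=> n_ge4.
have lt0 : (0 < n)%N by apply: leq_trans n_ge4.
have lt1 : (1 < n)%N by apply: leq_trans n_ge4.
have lt2 : (2 < n)%N by apply: leq_trans n_ge4.
have lt3 : (3 < n)%N by [].
case: i => [[|[|[|i]]] lt_i].
- by exists (Ordinal lt1), (Ordinal lt2), (Ordinal lt3).
- by exists (Ordinal lt0), (Ordinal lt2), (Ordinal lt3).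
- by exists (Ordinal lt0), (Ordinal lt1), (Ordinal lt3).
- by exists (Ordinal lt0), (Ordinal lt1), (Ordinal lt2).
Qed.

Lemma cards4 (T : finType) (a b c d : T) :
  a != b -> a != c -> a != d -> b != c -> b != d -> c != d -> #|[set a; b; c; d]| = 4.
Proof.
move=> /negbTE ab /negbTE ac /negbTE ad /negbTE bc /negbTE bd /negbTE cd.
have -> : [set a; b; c; d] = a |: (b |: (c |: [set d])).
  by apply/setP => y; rewrite !inE !orbA.
by rewrite !cardsU1 cards1 !inE ab ac ad bc bd cd.
Qed.

Unset Implicit Arguments.
Local Close Scope ring_scope.

Theorem mainTheorem6 (C : closedFieldType) (hC : [pchar C]%R =i pred0)
    (n : nat) (hn : (4 <= n)%N) (G : {set {set 'I_n}}) (hG : simple_graph G) :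
  geometrically_copious C G -> forall i : 'I_n, (3 <= degree G i)%N.
Proof.
move=> [_ [q [[s [s_KG s_neq0 qs_neq0]] fiber_dim2]]] i.
have [[I [_ indepI]] dim_le3] := fiber_dim2 s s_KG s_neq0 qs_neq0.
have [x x_fib] := alg_indep_on_nonempty indepI.
rewrite leqNgt; apply/negP => deg_lt3.
have row_i0 := low_degree_row_eq0 hG s_KG x_fib deg_lt3.
have [j [k [l [ji ki li [jk jl kl]]]]] := exists_three_others i hn.
have := dim_le3 _ (alg_indep_on_free_vertex hC hG s_KG row_i0 x_fib ji ki li jk jl kl).
by rewrite cards4 // eq_sym.
Qed.
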